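(* Let $G$ be a finite simple graph with $n$ vertices $v_1,\dots,v_n$, and let $\bar{\bar{d}}(G)=\sqrt{\frac{d(v_1)^2+d(v_2)^2+\cdots+d(v_n)^2}{n}}$, where $d(v)$ denotes the degree of $v$. Then $$\varphi(G)\geq \frac{n}{n-\bar{\bar{d}}(G)}.$$ Moreover, equality holds if and only if $n\equiv 0 \pmod{\varphi(G)}$ and $G$ is a regular graph of degree $\frac{n(\varphi(G)-1)}{\varphi(G)}$.
   Context: All graphs are finite, undirected, without loops or multiple edges. For a graph $G$ with $n$ vertices, a set $V\subseteq V(G)$ is called a $\delta$-set in $G$ if $d(v)\leq n-|V|$ for every $v\in V$. The graph $G$ is called a generalized $r$-partite graph if there is a partition $V(G)=V_1\cup\dots\cup V_r$ into pairwise disjoint sets each of which is a $\delta$-set in $G$. The invariant $\varphi(G)$ is the smallest integer $r$ such that $G$ is a generalized $r$-partite graph. *)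

From mathcomp Require Import all_boot all_order all_algebra.
Set Implicit Arguments. Unset Strict Implicit. Unset Printing Implicit Defensive.

(* A finite simple graph is a symmetric irreflexive relation [e] on a finType
   [T]; the hypotheses symmetric/irreflexive are stated in the theorem. *)
Section GraphDefs.
Variables (T : finType) (e : rel T).

Definition deg (v : T) : nat := #|[set w | e v w]|.

Definition delta_set (V : {set T}) : bool :=
  [forall v in V, deg v <= #|T| - #|V|].

Definition gen_partite (r : nat) : bool :=
  [exists f : {ffun T -> 'I_r}, [forall i : 'I_r, delta_set [set v | f v == i]]].

(* varphi(G): the least r such that G is generalized r-partite.
   (For a loopless graph, r = #|T| always works, so the minimum exists;
   the fallback value 0 is never used for simple graphs.) *)
Definition varphi : nat :=
  match @idP (gen_partite #|T|) with
  | ReflectT H => ex_minn (ex_intro (fun r => gen_partite r) #|T| H)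
  | ReflectF _ => 0
  end.
End GraphDefs.

(* Let V_1, ..., V_r be a partition of the vertices into delta-sets, a_i = |V_i|
   and c = n/r.  A vertex of V_i has degree at most n - a_i, hence
   sum_v d(v)^2 <= sum_i a_i (n - a_i)^2.  The cubic a (n - a)^2 lies below its
   tangent at c on [0, 2n - 2c], which contains [0, n] as soon as r >= 2, and
   since sum_i a_i = n the tangent values add up to n (n - c)^2.  So the quadratic
   mean of the degrees is at most n - n/r, i.e. r >= n / (n - dd); equality forces
   all classes to have size n/r and all degrees to be n - n/r. *)

From mathcomp Require Import all_boot all_order all_algebra.
From mathcomp Require Import ring lra.
Set Implicit Arguments.
Unset Strict Implicit.
Unset Printing Implicit Defensive.
Import Order.TTheory GRing.Theory Num.Theory.
Local Open Scope ring_scope.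

Lemma cubic_tangent (R : comPzRingType) (n c a : R) :
  a * (n - a) ^+ 2 = c * (n - c) ^+ 2 + (n - c) * (n - 3 * c) * (a - c)
                     - (a - c) ^+ 2 * (2 * n - 2 * c - a).
Proof. ring. Qed.

Lemma ler_sum_eq_pointwise (R : numDomainType) (I : finType) (F G : I -> R) :
  (forall i, F i <= G i) -> \sum_i F i = \sum_i G i -> forall i, F i = G i.
Proof.
move=> leFG eqFG i; apply/eqP; rewrite eq_sym -subr_eq0; apply/eqP.
have ge0 j : true -> 0 <= G j - F j by rewrite subr_ge0.
by apply: (psumr_eq0P ge0) => //; rewrite sumrB eqFG subrr.
Qed.

Section CubicMeanBound.
Variables (R : realFieldType) (I : finType) (a : I -> R) (n : R).
Hypotheses (n_gt0 : 0 < n) (a_ge0 : forall i, 0 <= a i) (sum_a : \sum_i a i = n).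

Let c := n / #|I|%:R.

Let card_gt0 : (0 < #|I|)%N.
Proof.
case: (posnP #|I|) => // /card0_eq I0.
by move: n_gt0; rewrite -sum_a big_pred0 ?ltxx.
Qed.

Let card_mul_mean : #|I|%:R * c = n.
Proof. by rewrite /c mulrC divfK // pnatr_eq0 -lt0n card_gt0. Qed.

Let mean_gt0 : 0 < c.
Proof. by rewrite divr_gt0 // ltr0n card_gt0. Qed.

Let term_le_sum i : a i <= n.
Proof. by rewrite -sum_a (bigD1 i) //= lerDl sumr_ge0. Qed.

Let two_terms_le_sum i j : i != j -> a i + a j <= n.
Proof.
move=> ij; rewrite -sum_a (bigD1 i) //= (bigD1 j) 1?eq_sym //= addrA.
by rewrite lerDl sumr_ge0.
Qed.

Let card_eq1_or_gt1 : (1 == #|I|) || (1 < #|I|)%N.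
Proof. by rewrite -leq_eqVlt; exact: card_gt0. Qed.

Let singleton_term : #|I| = 1%N -> forall i, a i = c.
Proof.
move=> I1 i; have [x Ix] := fintype1 I1.
rewrite /c I1 divr1 -sum_a (eq_bigr (fun=> a i)) => [|j _]; last by rewrite Ix -(Ix i).
by rewrite sumr_const I1.
Qed.

Let double_mean_le : (1 < #|I|)%N -> 2 * c <= n.
Proof.
by move=> I2; rewrite -[leRHS]card_mul_mean ler_wpM2r ?(ltW mean_gt0) ?ler_nat.
Qed.

Let cubic_gap_ge0 i : 0 <= (a i - c) ^+ 2 * (2 * n - 2 * c - a i).
Proof.
case/orP: card_eq1_or_gt1 => [/eqP/esym I1 | I2].
  by rewrite singleton_term // subrr expr0n mul0r.
rewrite mulr_ge0 ?sqr_ge0 //.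
by have := double_mean_le I2; have := term_le_sum i; lra.
Qed.

Let sum_cubic_gap :
  n * (n - c) ^+ 2 - \sum_i a i * (n - a i) ^+ 2
  = \sum_i (a i - c) ^+ 2 * (2 * n - 2 * c - a i).
Proof.
rewrite (eq_bigr (fun i => c * (n - c) ^+ 2 + (n - c) * (n - 3 * c) * (a i - c)
                           - (a i - c) ^+ 2 * (2 * n - 2 * c - a i))); last first.
  by move=> i _; exact: cubic_tangent.
rewrite sumrB big_split /= sumr_const -mulr_sumr sumrB sum_a sumr_const.
rewrite -[#|xpredT|]/(#|I|) -(mulr_natl (c * _)) -(mulr_natl c) mulrA.
by rewrite card_mul_mean subrr mulr0; ring.
Qed.

Lemma sum_cubic_le : \sum_i a i * (n - a i) ^+ 2 <= n * (n - c) ^+ 2.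
Proof. by rewrite -subr_ge0 sum_cubic_gap sumr_ge0. Qed.

Lemma sum_cubic_eq :
  \sum_i a i * (n - a i) ^+ 2 = n * (n - c) ^+ 2 -> forall i, a i = c.
Proof.
move=> eq_sum.
have gap0 i : (a i - c) ^+ 2 * (2 * n - 2 * c - a i) = 0.
  apply: (psumr_eq0P (P := xpredT) (fun j _ => cubic_gap_ge0 j)) => //.
  by rewrite -sum_cubic_gap eq_sum subrr.
move=> i; have /eqP := gap0 i; rewrite mulf_eq0 sqrf_eq0 !subr_eq0.
case/orP=> [/eqP // | /eqP ai_root].
case/orP: card_eq1_or_gt1 => [/eqP/esym I1 | I2]; first exact: singleton_term.
(* The second root a i = 2n - 2c <= n forces #|I| = 2 and a i = n, so any
   other index j has a j = 0, whose gap n c^2 is positive. *)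
have /card_gt0P [j /= ji] : (0 < #|predC1 i|)%N by rewrite cardC1 -subn1 subn_gt0.
have aj0 : a j = 0.
  have := @two_terms_le_sum j i ji; have := double_mean_le I2.
  by have := a_ge0 j; lra.
have /eqP := gap0 j; rewrite aj0 sub0r sqrrN mulf_eq0 sqrf_eq0 (gt_eqF mean_gt0) /=.
by move=> /eqP; have := double_mean_le I2; have := mean_gt0; lra.
Qed.

End CubicMeanBound.

Section ClassPartition.
Variables (T : finType) (r : nat) (f : {ffun T -> 'I_r}).

Definition class_size (i : 'I_r) : nat := #|[set v | f v == i]|.

Lemma sum_over_classes (V : nmodType) (F : 'I_r -> V) :
  \sum_v F (f v) = \sum_i F i *+ class_size i.
Proof.
rewrite (partition_big f xpredT) //=; apply: eq_bigr => i _.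
rewrite (eq_bigr (fun=> F i)) => [|v /eqP -> //]; rewrite sumr_const.
by congr (_ *+ _); apply: eq_card => v; rewrite inE.
Qed.

Lemma sum_class_size (R : pzSemiRingType) : \sum_i (class_size i)%:R = #|T|%:R :> R.
Proof. by rewrite -(sum_over_classes (fun=> 1 : R)) sumr_const. Qed.

Variable (e : rel T).
Hypothesis f_delta : forall i, delta_set e [set v | f v == i].

Lemma deg_le_class v : (deg e v <= #|T| - class_size (f v))%N.
Proof. by move/forallP: (f_delta (f v)) => /(_ v); rewrite inE eqxx. Qed.

Variables (R : realFieldType).
Hypothesis T_gt0 : (0 < #|T|)%N.

Let n : R := #|T|%:R.
Let S : R := \sum_v ((deg e v) ^ 2)%:R.

Let n_gt0 : 0 < n. Proof. by rewrite ltr0n. Qed.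

Let class_ge0 i : 0 <= (class_size i)%:R :> R. Proof. exact: ler0n. Qed.

Let natr_deg_le_class v : (deg e v)%:R <= n - (class_size (f v))%:R.
Proof. by rewrite -natrB ?max_card // ler_nat deg_le_class. Qed.

Let class_gap_ge0 v : 0 <= n - (class_size (f v))%:R.
Proof. exact: le_trans (ler0n _ _) (natr_deg_le_class v). Qed.

Let sqr_deg_le_class v : ((deg e v) ^ 2)%:R <= (n - (class_size (f v))%:R) ^+ 2.
Proof. by rewrite natrX lerXn2r ?nnegrE ?ler0n ?class_gap_ge0. Qed.

Let sum_class_sqr :
  \sum_v (n - (class_size (f v))%:R) ^+ 2
  = \sum_i (class_size i)%:R * (n - (class_size i)%:R) ^+ 2.
Proof.
rewrite (sum_over_classes (fun i => (n - (class_size i)%:R) ^+ 2)).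
by apply: eq_bigr => i _; rewrite mulr_natl.
Qed.

Let sum_class_cubic_le :
  \sum_i (class_size i)%:R * (n - (class_size i)%:R) ^+ 2 <= n * (n - n / r%:R) ^+ 2.
Proof. by have := sum_cubic_le n_gt0 class_ge0 (sum_class_size R); rewrite card_ord. Qed.

Lemma delta_partition_sum_sqr_deg_le : S <= n * (n - n / r%:R) ^+ 2.
Proof. by rewrite (le_trans _ sum_class_cubic_le) // -sum_class_sqr ler_sum. Qed.

Lemma delta_partition_sum_sqr_deg_eq :
  S = n * (n - n / r%:R) ^+ 2 -> (r %| #|T|)%N /\ forall v, (deg e v)%:R = n - n / r%:R.
Proof.
move=> S_eq.
have classes_eq :
    \sum_i (class_size i)%:R * (n - (class_size i)%:R) ^+ 2 = n * (n - n / r%:R) ^+ 2.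
  by apply/eqP; rewrite eq_le sum_class_cubic_le -S_eq -sum_class_sqr ler_sum.
have class_mean i : (class_size i)%:R = n / r%:R.
  by have := sum_cubic_eq n_gt0 class_ge0 (sum_class_size R); rewrite card_ord; apply.
have deg_eq v : (deg e v)%:R = n - n / r%:R.
  have sum_sqr_deg_eq : S = \sum_v (n - (class_size (f v))%:R) ^+ 2.
    by apply/eqP; rewrite eq_le ler_sum //= sum_class_sqr classes_eq -S_eq.
  have /eqP := ler_sum_eq_pointwise sqr_deg_le_class sum_sqr_deg_eq v.
  by rewrite natrX eqrXn2 ?ler0n ?class_gap_ge0 // class_mean => /eqP.
split=> //; have [v _] := card_gt0P T_gt0.
have r_neq0 : r%:R != 0 :> R by rewrite pnatr_eq0 -lt0n (leq_ltn_trans _ (ltn_ord (f v))).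
have /eqP : (r * class_size (f v))%:R = n :> R by rewrite natrM class_mean mulrC divfK.
by rewrite eqr_nat => /eqP <-; exact: dvdn_mulr.
Qed.

End ClassPartition.

Lemma div_sub_le (R : realFieldType) (n r d : R) :
  0 < n -> 0 < r -> d <= n - n / r ->
  n / (n - d) <= r /\ (r = n / (n - d) <-> d = n - n / r).
Proof.
move=> n_gt0 r_gt0 d_le; have mean_gt0 : 0 < n / r by rewrite divr_gt0.
have nd_gt0 : 0 < n - d by lra.
split; first by rewrite ler_pdivrMr // -ler_pdivrMl //; lra.
have [n_neq0 nd_neq0] := (gt_eqF n_gt0, gt_eqF nd_gt0).
split=> [-> | ->]; field; first by rewrite nd_neq0 n_neq0.
by rewrite gt_eqF // opprB addrCA subrr addr0 n_neq0.
Qed.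

Lemma sqrt_div_le (R : rcfType) (S n m : R) :
  0 < n -> 0 <= m -> S <= n * m ^+ 2 -> Num.sqrt (S / n) <= m.
Proof.
move=> n_gt0 m_ge0 S_le; rewrite -(ger0_norm m_ge0) -sqrtr_sqr ler_wsqrtr //.
by rewrite ler_pdivrMr // mulrC.
Qed.

Lemma sqrt_div_eq (R : rcfType) (S n m : R) :
  0 < n -> 0 <= S -> 0 <= m -> Num.sqrt (S / n) = m <-> S = n * m ^+ 2.
Proof.
move=> n_gt0 S_ge0 m_ge0; have Sn_ge0 : 0 <= S / n by rewrite divr_ge0 // ltW.
split=> [<- | ->]; first by rewrite sqr_sqrtr // mulrC divfK ?gt_eqF.
by rewrite [n * _]mulrC mulfK ?gt_eqF // sqrtr_sqr ger0_norm.
Qed.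

Lemma gen_partite_card (T : finType) (e : rel T) : irreflexive e -> gen_partite e #|T|.
Proof.
move=> e_irr; pose f := [ffun v : T => enum_rank v]; apply/existsP; exists f.
apply/forallP => i; apply/forallP => v; apply/implyP; rewrite inE ffunE => /eqP vi.
have class_le1 : (#|[set w | f w == i]| <= 1)%N.
  rewrite -(cards1 v); apply: subset_leq_card; apply/subsetP => w.
  by rewrite !inE ffunE -vi => /eqP /enum_rank_inj ->.
have deg_le : (deg e v <= #|T|.-1)%N.
  rewrite /deg -(cardsC1 v); apply: subset_leq_card; apply/subsetP => w.
  by rewrite !inE; apply: contraTN => /eqP ->; rewrite e_irr.
by rewrite (leq_trans deg_le) // -subn1 (leq_sub2l _ class_le1).
Qed.

Lemma varphi_gen_partite (T : finType) (e : rel T) :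
  irreflexive e -> gen_partite e (varphi e).
Proof.
move=> e_irr; rewrite /varphi; case: {-}_ / idP => [part_card | []].
  by case: ex_minnP.
exact: gen_partite_card.
Qed.

Theorem theorem1p1 (R : rcfType) (T : finType) (e : rel T)
  (e_sym : symmetric e) (e_irr : irreflexive e) (n_pos : (0 < #|T|)%N) :
  let n : R := (#|T|)%:R in
  let dd : R := Num.sqrt ((\sum_(v : T) ((deg e v) ^ 2)%:R) / n) in
  let phi := varphi e in
  n / (n - dd) <= phi%:R /\
  (phi%:R = n / (n - dd) <->
     ((#|T| %% phi)%N = 0%N /\
      forall v : T, (deg e v)%:R = n * (phi%:R - 1) / phi%:R)).
Proof.
move=> n dd phi.
have [f /forallP f_delta] := existsP (varphi_gen_partite e_irr).
have [v0 _] := card_gt0P n_pos.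
have phi_gt0 : 0 < phi%:R :> R by rewrite ltr0n (leq_ltn_trans _ (ltn_ord (f v0))).
have n_gt0 : 0 < n by rewrite ltr0n.
rewrite {}/dd; set S := \sum_v _; set m := n - n / phi%:R.
have m_ge0 : 0 <= m.
  rewrite subr_ge0 ler_pdivrMr // ler_peMr ?(ltW n_gt0) //.
  by rewrite -[1]/(1%:R) ler_nat -(ltr0n R).
have m_eq : m = n * (phi%:R - 1) / phi%:R by rewrite /m; field; rewrite gt_eqF.
have S_ge0 : 0 <= S by rewrite sumr_ge0.
have [phi_le phi_eq] := div_sub_le n_gt0 phi_gt0
  (sqrt_div_le n_gt0 m_ge0 (delta_partition_sum_sqr_deg_le f_delta R n_pos)).
split=> //; rewrite phi_eq (sqrt_div_eq n_gt0 S_ge0 m_ge0) -m_eq.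
split=> [/(delta_partition_sum_sqr_deg_eq f_delta n_pos) [phi_dvd deg_eq] | [_ deg_eq]].
  by split=> //; apply/eqP.
rewrite /S (eq_bigr (fun=> m ^+ 2)) => [|v _]; last by rewrite natrX deg_eq.
by rewrite sumr_const -mulr_natl.
Qed.
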